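(* Let $d\ge 3$, let $q$ be a prime power, let $V=\mathbb{F}_q^d$ and $1\le k<d/2$. Let $G$ be a group with $\mathrm{PSL}_d(q)\trianglelefteq G\le \mathrm{Aut}(\mathrm{PSL}_d(q))=\mathrm{P}\Gamma\mathrm{L}_d(q)\rtimes\langle\iota\rangle$ and $G\not\le \mathrm{P}\Gamma\mathrm{L}_d(q)$, acting naturally on $$\Omega_k^2=\{\{W,U\}\mid \dim W=k,\ \dim U=d-k,\ W\le U\}.$$ Then $G$ is not $\mathrm{IBIS}$.
   Context: Here $\iota$ is the graph (inverse-transpose) automorphism, which acts on subspaces of $V$ as the standard polarity sending a $k$-dimensional subspace to a $(d-k)$-dimensional one (reversing inclusions). A base of a permutation group is a sequence of points with trivial pointwise stabilizer; it is irredundant if each successive stabilizer is strictly smaller. $G$ is $\mathrm{IBIS}$ if all irredundant bases have the same cardinality. *)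

From HB Require Import structures.
From mathcomp Require Import all_boot all_order all_algebra all_fingroup all_field.
Set Implicit Arguments. Unset Strict Implicit. Unset Printing Implicit Defensive.
Import GRing.Theory.
Local Open Scope ring_scope.

(* Subspaces of V = F^d are represented by their sets of vectors. *)
Definition subspace_dim (F : finFieldType) (d m : nat) (S : {set 'rV[F]_d}) : bool :=
  [exists A : 'M[F]_(m, d), (\rank A == m) && (S == [set v : 'rV[F]_d | (v <= A)%MS])].

Definition is_flagpair (F : finFieldType) (d k : nat) (x : {set {set 'rV[F]_d}}) : bool :=
  [exists W : {set 'rV[F]_d}, exists U : {set 'rV[F]_d},
    [&& x == [set W; U], subspace_dim k W, subspace_dim (d - k)%N U & W \subset U]].

Definition Omega (F : finFieldType) (d k : nat) :=
  {x : {set {set 'rV[F]_d}} | is_flagpair k x}.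

Definition semilin_img (F : finFieldType) (d : nat) (A : 'M[F]_d) (sigma : {rmorphism F -> F})
  (S : {set 'rV[F]_d}) : {set 'rV[F]_d} :=
  [set (map_mx sigma v) *m A | v in S].

Definition perp (F : finFieldType) (d : nat) (S : {set 'rV[F]_d}) : {set 'rV[F]_d} :=
  [set v : 'rV[F]_d | [forall w in S, v *m w^T == 0]].

(* permutations of Omega induced by PSL_d(q) (i.e. by SL_d(q)) *)
Definition is_PSL_perm (F : finFieldType) (d k : nat) (p : {perm Omega F d k}) : Prop :=
  exists A : 'M[F]_d, \det A = 1 /\
    forall x : Omega F d k, val (p x) = [set [set v *m A | v in S] | S : {set 'rV[F]_d} in val x].

Definition is_PGammaL_perm (F : finFieldType) (d k : nat) (p : {perm Omega F d k}) : Prop :=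
  exists (A : 'M[F]_d) (sigma : {rmorphism F -> F}), A \in unitmx /\
    forall x : Omega F d k, val (p x) = [set semilin_img A sigma S | S : {set 'rV[F]_d} in val x].

(* permutations of Omega induced by the coset PGammaL_d(q) * iota *)
Definition is_graph_perm (F : finFieldType) (d k : nat) (p : {perm Omega F d k}) : Prop :=
  exists (A : 'M[F]_d) (sigma : {rmorphism F -> F}), A \in unitmx /\
    forall x : Omega F d k, val (p x) = [set perp (semilin_img A sigma S) | S : {set 'rV[F]_d} in val x].

Definition is_Aut_perm (F : finFieldType) (d k : nat) (p : {perm Omega F d k}) : Prop :=
  is_PGammaL_perm p \/ is_graph_perm p.

Definition pw_stab (T : finType) (G : {group {perm T}}) (s : seq T) : {set {perm T}} :=
  [set g in G | all (fun x => g x == x) s].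

Definition is_base (T : finType) (G : {group {perm T}}) (s : seq T) : Prop :=
  pw_stab G s = 1%g.

Definition irredundant (T : finType) (G : {group {perm T}}) (s : seq T) : Prop :=
  forall i, (i < size s)%N -> pw_stab G (take i.+1 s) \proper pw_stab G (take i s).

Definition IBIS (T : finType) (G : {group {perm T}}) : Prop :=
  forall s t : seq T, is_base G s -> irredundant G s -> is_base G t -> irredundant G t ->
    size s = size t.

From HB Require Import structures.
From mathcomp Require Import all_boot all_order all_algebra all_fingroup all_field.
From mathcomp Require Import zify.
Set Implicit Arguments. Unset Strict Implicit. Unset Printing Implicit Defensive.
Import GRing.Theory.

(* Write W_i and U_i for the spans of e_i, ..., e_(i+k-1) and of e_i, ..., e_(i+d-k-1),
   and consider the points a = {W_0, U_0}, c = {W_1, U_1} and x = {W_1, U_0}.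
   Transvections in SL_d(q) show that (x, a, c) is irredundant.  Conversely, an element
   of G fixing a and c fixes x: if it preserves inclusion it fixes all four subspaces,
   and if it reverses inclusion it swaps W_i with U_i, so it would turn W_1 <= U_0 into
   U_1 >= W_0, which fails at e_0.  Hence x is redundant in (a, c, x); completing
   (x, a, c) to an irredundant base and dropping x from the rotated base gives a base
   of smaller size, which pruning turns into a shorter irredundant base. *)

Section Bases.
Variables (T : finType) (G : {group {perm T}}).

Lemma pw_stab_cat s u : pw_stab G (s ++ u) = pw_stab G s :&: pw_stab G u.
Proof. by apply/setP=> g; rewrite !inE all_cat; case: (g \in G). Qed.

Lemma eq_pw_stab s t : s =i t -> pw_stab G s = pw_stab G t.
Proof. by move=> eq_st; apply/setP=> g; rewrite !inE (eq_all_r eq_st). Qed.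

Lemma pw_stab_enum : pw_stab G (enum T) = 1%g.
Proof.
apply/eqP; rewrite eqEsubset sub1set inE group1 andTb; apply/andP; split.
  apply/subsetP=> g; rewrite !inE => /andP[_ /allP fix_g].
  by apply/eqP/permP=> x; rewrite perm1; apply/eqP/fix_g; rewrite mem_enum.
by apply/allP=> x _; rewrite perm1.
Qed.

Lemma proper_pw_stab_rcons s y g :
  g \in pw_stab G s -> g y != y -> pw_stab G (rcons s y) \proper pw_stab G s.
Proof.
move=> stab_g moved_y; apply/properP; split; first by rewrite -cats1 pw_stab_cat subsetIl.
by exists g; rewrite // inE all_rcons (negbTE moved_y) andbF.
Qed.

Lemma irredundant_rcons s y : irredundant G s ->
  pw_stab G (rcons s y) \proper pw_stab G s -> irredundant G (rcons s y).
Proof.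
move=> irr_s lt_y i; rewrite size_rcons ltnS leq_eqVlt => /predU1P[->|lt_i].
  by rewrite take_oversize ?size_rcons // -cats1 take_size_cat // cats1.
by rewrite -cats1 !takel_cat ?(ltnW lt_i) //; apply: irr_s.
Qed.

(* Greedily append the points of [u] that still shrink the stabiliser. *)
Lemma irredundant_extension s u : irredundant G s ->
  exists u0, [/\ irredundant G (s ++ u0), pw_stab G (s ++ u0) = pw_stab G (s ++ u)
                 & size u0 <= size u].
Proof.
move=> irr_s; elim/last_ind: u => [|u y [u0 [irr_u0 stab_u0 le_u0]]].
  by exists [::]; rewrite cats0.
have stab_rcons v : pw_stab G (s ++ rcons v y) = pw_stab G (s ++ v) :&: pw_stab G [:: y].
  by rewrite -cats1 catA pw_stab_cat.
have [lt_y | not_lt_y] := boolP (pw_stab G (rcons (s ++ u0) y) \proper pw_stab G (s ++ u0)).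
  exists (rcons u0 y); split; last by rewrite !size_rcons.
    by rewrite -rcons_cat; apply: irredundant_rcons.
  by rewrite !stab_rcons stab_u0.
exists u0; split => //; last by rewrite size_rcons leqW.
have fix_y : pw_stab G (s ++ u0) \subset pw_stab G [:: y].
  move: not_lt_y; rewrite /proper -cats1 pw_stab_cat subsetIl negbK.
  by rewrite subsetI => /andP[].
by rewrite stab_rcons -stab_u0 (setIidPl fix_y).
Qed.

Lemma irredundant_base_extension s : irredundant G s ->
  exists u, is_base G (s ++ u) /\ irredundant G (s ++ u).
Proof.
move=> /(irredundant_extension (enum T))[u [irr_u stab_u _]].
exists u; split=> //; rewrite /is_base stab_u -pw_stab_enum.
by apply: eq_pw_stab => x; rewrite mem_cat mem_enum orbT.
Qed.

Lemma irredundant_sub_base t : is_base G t ->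
  exists t0, [/\ is_base G t0, irredundant G t0 & size t0 <= size t].
Proof.
have irr_nil : irredundant G [::] by [].
move=> base_t; have [t0 [irr_t0 stab_t0 le_t0]] := irredundant_extension t irr_nil.
by exists t0; split; rewrite // /is_base stab_t0.
Qed.

Lemma not_IBIS_of_redundant s p y : irredundant G s -> perm_eq s (rcons p y) ->
  pw_stab G p \subset pw_stab G (rcons p y) -> ~ IBIS G.
Proof.
move=> irr_s perm_s red_y IBIS_G.
have [u [base_su irr_su]] := irredundant_base_extension irr_s.
have stab_p : pw_stab G p = pw_stab G (rcons p y).
  by apply/eqP; rewrite eqEsubset red_y -cats1 pw_stab_cat subsetIl.
have base_pu : is_base G (p ++ u).
  rewrite /is_base pw_stab_cat stab_p -pw_stab_cat -base_su.
  by apply: eq_pw_stab => x; rewrite !mem_cat (perm_mem perm_s).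
have [t [base_t irr_t le_t]] := irredundant_sub_base base_pu.
move: le_t; rewrite -(IBIS_G _ _ base_su irr_su base_t irr_t).
by rewrite !size_cat (perm_size perm_s) size_rcons addSn ltnn.
Qed.

End Bases.

Section SetPairs.
Variable T : finType.

Lemma imset_set2 (aT : finType) (f : aT -> T) (a b : aT) :
  f @: [set a; b] = [set f a; f b].
Proof. by rewrite imsetU1 imset_set1. Qed.

Lemma set2_injl (U : T) : injective (fun W => [set W; U]).
Proof.
move=> W W' /= eq_WU; have : W' \in [set W; U] by rewrite eq_WU set21.
case/set2P=> // W'U; have : W \in [set W'; U] by rewrite -eq_WU set21.
by rewrite W'U setUid => /set1P.
Qed.

Lemma set2_eq (a b c e : T) :
  [set a; b] = [set c; e] -> (a = c /\ b = e) \/ (a = e /\ b = c).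
Proof.
move=> eq_ab; have : a \in [set c; e] by rewrite -eq_ab set21.
case/set2P=> a_eq; [left | right]; split=> //; apply: (@set2_injl a).
  by rewrite /= setUC eq_ab a_eq setUC.
by rewrite /= setUC eq_ab a_eq.
Qed.

End SetPairs.

Section SetMapsFixingPairs.
Variables (T : finType) (h : {set T} -> {set T}).
Implicit Types W U : {set T}.

Lemma homo_imset_set2_fixed W U : {homo h : A B / A \subset B} -> W \proper U ->
  h @: [set W; U] = [set W; U] -> h W = W /\ h U = U.
Proof.
move=> h_mono /andP[WU not_UW]; rewrite imset_set2 => /set2_eq[//|[hW hU]].
by move: (h_mono _ _ WU); rewrite hW hU (negbTE not_UW).
Qed.

Lemma anti_imset_set2_swapped W U : {homo h : A B / A \subset B >-> B \subset A} ->
  W \proper U -> h @: [set W; U] = [set W; U] -> h W = U /\ h U = W.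
Proof.
move=> h_anti /andP[WU not_UW]; rewrite imset_set2 => /set2_eq[[hW hU]|//].
by move: (h_anti _ _ WU); rewrite hW hU (negbTE not_UW).
Qed.

Lemma imset_set2_fixed_cross W1 U1 W2 U2 :
  W1 \proper U1 -> W2 \proper U2 -> W2 \subset U1 -> ~~ (W1 \subset U2) ->
  {homo h : A B / A \subset B} \/ {homo h : A B / A \subset B >-> B \subset A} ->
  h @: [set W1; U1] = [set W1; U1] -> h @: [set W2; U2] = [set W2; U2] ->
  h @: [set W2; U1] = [set W2; U1].
Proof.
move=> WU1 WU2 W2U1 not_W1U2 [h_mono | h_anti] fix1 fix2.
  have [_ hU1] := homo_imset_set2_fixed h_mono WU1 fix1.
  have [hW2 _] := homo_imset_set2_fixed h_mono WU2 fix2.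
  by rewrite imset_set2 hW2 hU1.
have [_ hU1] := anti_imset_set2_swapped h_anti WU1 fix1.
have [hW2 _] := anti_imset_set2_swapped h_anti WU2 fix2.
by move: (h_anti _ _ W2U1); rewrite hU1 hW2 (negbTE not_W1U2).
Qed.

End SetMapsFixingPairs.

Section CoordinateSubspaces.
Local Open Scope ring_scope.
Variables (F : finFieldType) (d : nat).
Implicit Types (lo m : nat) (i j : 'I_d) (v : 'rV[F]_d).

Definition coord_space lo m : {set 'rV[F]_d} :=
  [set v : 'rV[F]_d | [forall j : 'I_d, (v 0 j != 0) ==> (lo <= j < lo + m)%N]].

Lemma delta_coord_space lo m i : (delta_mx 0 i \in coord_space lo m) = (lo <= i < lo + m)%N.
Proof.
rewrite inE; apply/forallP/idP => [/(_ i)|i_in j]; first by rewrite mxE !eqxx oner_eq0.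
by rewrite mxE eqxx /=; case: (@eqP _ j i) => [->|_]; rewrite ?i_in ?implybT ?eqxx.
Qed.

Lemma coord_space_subset lo m lo' m' :
  (lo' <= lo)%N -> (lo + m <= lo' + m')%N -> coord_space lo m \subset coord_space lo' m'.
Proof.
move=> le_lo le_hi; apply/subsetP=> v; rewrite !inE => /forall_inP supp_v.
by apply/forall_inP=> j /supp_v; lia.
Qed.

Lemma coord_space_not_subset lo m lo' m' i : (lo <= i < lo + m)%N ->
  ~~ (lo' <= i < lo' + m')%N -> ~~ (coord_space lo m \subset coord_space lo' m').
Proof.
by move=> i_in i_out; apply/subsetPn; exists (delta_mx 0 i); rewrite delta_coord_space.
Qed.

Lemma coord_space_proper lo m lo' m' : (lo' <= lo)%N -> (lo + m <= lo' + m')%N ->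
  (m < m')%N -> (lo' + m' <= d)%N -> coord_space lo m \proper coord_space lo' m'.
Proof.
move=> le_lo le_hi lt_m le_d; rewrite properE coord_space_subset //=.
have [lt_lo | eq_lo] := ltnP lo' lo.
  have lt_d : (lo' < d)%N by lia.
  by apply: (coord_space_not_subset (i := Ordinal lt_d)) => /=; lia.
have lt_d : (lo + m < d)%N by lia.
by apply: (coord_space_not_subset (i := Ordinal lt_d)) => /=; lia.
Qed.

Definition coord_mx lo m : 'M[F]_(m, d) := \matrix_(r, j) (j == (lo + r)%N :> nat)%:R.

Lemma coord_mx_row_free lo m : (lo + m <= d)%N -> row_free (coord_mx lo m).
Proof.
move=> le_d; apply/row_freeP; exists (coord_mx lo m)^T.
apply/matrixP=> r r'; rewrite /coord_mx !mxE.
have lt_d : (lo + r < d)%N by have := ltn_ord r; lia.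
rewrite (bigD1 (Ordinal lt_d)) //= big1 => [|j ne_j]; last first.
  by move: ne_j; rewrite !mxE -val_eqE /= => /negPf->; rewrite mul0r.
by rewrite !mxE !eqxx mul1r addr0 eqn_add2l (inj_eq val_inj).
Qed.

Lemma coord_spaceE lo m : (lo + m <= d)%N ->
  coord_space lo m = [set v : 'rV[F]_d | (v <= coord_mx lo m)%MS].
Proof.
move=> le_d; apply/setP=> v; rewrite !inE; apply/forallP/idP=> [supp_v|].
  rewrite [v]row_sum_delta; apply: summx_sub => j _.
  have /implyP := supp_v j; case: eqP => [-> _|_ /(_ isT) j_in].
    by rewrite scale0r sub0mx.
  have lt_m : (j - lo < m)%N by lia.
  have -> : delta_mx 0 j = row (Ordinal lt_m) (coord_mx lo m).
    by apply/rowP=> c; rewrite !mxE /= subnKC //; lia.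
  by apply/scalemx_sub/row_sub.
case/submxP=> D -> j; apply/implyP; apply: contraR => j_out.
rewrite mxE big1 // => r _; rewrite mxE; case: eqP => [j_eq|]; last by rewrite mulr0.
by move: j_out; rewrite j_eq; have := ltn_ord r; lia.
Qed.

Lemma coord_space_dim lo m : (lo + m <= d)%N -> subspace_dim m (coord_space lo m).
Proof.
move=> le_d; apply/existsP; exists (coord_mx lo m).
apply/andP; split; first exact: coord_mx_row_free.
by rewrite coord_spaceE.
Qed.

Definition transvection i j : 'M[F]_d := 1%:M + delta_mx i j.

Lemma det_transvection i j : i != j -> \det (transvection i j) = 1.
Proof.
wlog lt_ji : i j / (j < i)%N => [wlog_lt ij | ij].
  have [lt_ji | lt_ij | eq_ij] := ltngtP j i; first exact: wlog_lt.
    by rewrite -det_tr /transvection linearD /= trmx1 trmx_delta (wlog_lt j i) // eq_sym.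
  by rewrite (val_inj eq_ij) eqxx in ij.
rewrite det_trig.
  apply: big1 => r _; rewrite !mxE eqxx.
  suff -> : (r == i) && (r == j) = false by rewrite addr0.
  by apply: contraNF ij => /andP[/eqP <- /eqP <-].
apply/is_trig_mxP=> r c lt_rc; have /negPf ne_rc : r != c by rewrite -val_eqE neq_ltn lt_rc.
rewrite !mxE ne_rc add0r.
suff -> : (r == i) && (c == j) = false by [].
by apply: contraTF lt_rc => /andP[/eqP -> /eqP ->]; rewrite -leqNgt ltnW.
Qed.

Lemma transvection_unit i j : i != j -> transvection i j \in unitmx.
Proof. by move=> ij; rewrite unitmxE det_transvection ?unitr1. Qed.

Lemma mul_transvection v i j : v *m transvection i j = v + v 0 i *: delta_mx 0 j.
Proof.
rewrite mulmxDr mulmx1; congr (_ + _); apply/rowP=> c.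
rewrite !mxE (bigD1 i) //= big1 => [|r /negPf ne_ri]; last by rewrite !mxE ne_ri mulr0.
by rewrite !mxE !eqxx addr0 mulr_natr.
Qed.

Definition mx_img (A : 'M[F]_d) (S : {set 'rV[F]_d}) : {set 'rV[F]_d} := [set v *m A | v in S].

Lemma mx_img_inj A : A \in unitmx -> injective (mx_img A).
Proof. by move=> A_unit; apply/imset_inj/(can_inj (mulmxK A_unit)). Qed.

Lemma transvection_fixes_coord_spaceE lo m i j : i != j ->
  (mx_img (transvection i j) (coord_space lo m) == coord_space lo m)
    = ((lo <= i < lo + m) ==> (lo <= j < lo + m))%N.
Proof.
move=> ij; apply/eqP/implyP=> [fix_S i_in | i_in_j_in].
  have : delta_mx 0 i *m transvection i j \in coord_space lo m.
    by rewrite -fix_S; apply: imset_f; rewrite delta_coord_space.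
  rewrite mul_transvection inE => /forallP/(_ j); rewrite !mxE !eqxx /= mulr1.
  case: (@eqP _ j i) => [ji | _]; first by rewrite ji eqxx in ij.
  by rewrite add0r oner_eq0.
apply/eqP; rewrite eqEcard card_imset ?leqnn ?andbT; last first.
  exact/(can_inj (mulmxK (transvection_unit ij))).
apply/subsetP=> _ /imsetP[v + ->]; rewrite !inE => /forall_inP supp_v.
apply/forall_inP=> c.
rewrite mul_transvection !mxE eqxx /=.
have [vi0 | /supp_v/i_in_j_in j_in] := eqVneq (v 0 i) 0.
  by rewrite vi0 mul0r addr0 => /supp_v.
by case: (@eqP _ c j) => [-> | _]; rewrite ?mulr0 ?addr0 // => /supp_v.
Qed.

Lemma subspace_dim_mx_img A m S : A \in unitmx ->
  subspace_dim m S -> subspace_dim m (mx_img A S).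
Proof.
move=> A_unit /existsP[B /andP[/eqP rank_B /eqP ->]]; apply/existsP; exists (B *m A).
rewrite mxrankMfree ?row_free_unit // rank_B eqxx /=.
apply/eqP/setP=> w; rewrite inE; apply/imsetP/idP => [[v]|/submxP[D ->]].
  by rewrite inE => v_B ->; apply: submxMr.
by exists (D *m B); rewrite ?inE ?submxMl ?mulmxA.
Qed.

End CoordinateSubspaces.

Section FlagPerms.
Local Open Scope ring_scope.
Variables (F : finFieldType) (d k : nat).

Lemma is_flagpair_mx_img (A : 'M[F]_d) X : A \in unitmx ->
  is_flagpair k X -> is_flagpair k (mx_img A @: X).
Proof.
move=> A_unit /existsP[W /existsP[U /and4P[/eqP -> dim_W dim_U WU]]].
apply/existsP; exists (mx_img A W); apply/existsP; exists (mx_img A U).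
by rewrite imset_set2 eqxx !subspace_dim_mx_img //= imsetS.
Qed.

Variables (A : 'M[F]_d) (A_unit : A \in unitmx).

Definition flag_map (y : Omega F d k) : Omega F d k :=
  exist _ (mx_img A @: val y) (is_flagpair_mx_img A_unit (valP y)).

Lemma flag_map_inj : injective flag_map.
Proof. by move=> y z /(congr1 val)/(imset_inj (mx_img_inj A_unit))/val_inj. Qed.

Definition flag_perm : {perm Omega F d k} := perm flag_map_inj.

Lemma val_flag_perm y : val (flag_perm y) = mx_img A @: val y.
Proof. by rewrite permE. Qed.

Lemma flag_perm_PSL : \det A = 1 -> is_PSL_perm flag_perm.
Proof. by move=> det_A; exists A; split=> // y; rewrite val_flag_perm. Qed.

Lemma flag_perm_fixedE y (W U : {set 'rV[F]_d}) : val y = [set W; U] -> W \proper U ->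
  (flag_perm y == y) = (mx_img A W == W) && (mx_img A U == U).
Proof.
move=> y_WU WU; rewrite -val_eqE val_flag_perm y_WU.
apply/eqP/andP=> [fixed | [/eqP fix_W /eqP fix_U]]; last by rewrite imset_set2 fix_W fix_U.
have mx_img_mono : {homo mx_img A : S S' / S \subset S'} by move=> S S'; apply: imsetS.
by have [-> ->] := homo_imset_set2_fixed mx_img_mono WU fixed.
Qed.

End FlagPerms.

Lemma perp_subset (F : finFieldType) d (S S' : {set 'rV[F]_d}) :
  S \subset S' -> perp S' \subset perp S.
Proof.
move=> SS'; apply/subsetP=> v; rewrite !inE => /forall_inP perp_v.
by apply/forall_inP=> w /(subsetP SS'); apply: perp_v.
Qed.

Lemma Aut_perm_imset (F : finFieldType) d k (p : {perm Omega F d k}) : is_Aut_perm p ->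
  exists2 h : {set 'rV[F]_d} -> {set 'rV[F]_d}, forall y, val (p y) = h @: val y &
    {homo h : S S' / S \subset S'} \/ {homo h : S S' / S \subset S' >-> S' \subset S}.
Proof.
case=> [] [A [sigma [_ val_p]]].
  by exists (semilin_img A sigma) => //; left=> S S'; apply: imsetS.
by exists (fun S => perp (semilin_img A sigma S)) => //; right=> S S' SS'; apply/perp_subset/imsetS.
Qed.

Section CoordinateFlags.
Variables (F : finFieldType) (d k : nat).
Hypotheses (k_gt0 : (0 < k)%N) (two_k_lt_d : (2 * k < d)%N).

Local Notation W lo := (coord_space F d lo k).
Local Notation U lo := (coord_space F d lo (d - k)).

Lemma coord_flag_proper lo1 lo2 : (lo2 <= lo1 <= 1)%N -> W lo1 \proper U lo2.
Proof. by move=> lo12; apply: coord_space_proper; lia. Qed.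

Lemma is_flagpair_coord lo1 lo2 : (lo2 <= lo1 <= 1)%N -> is_flagpair k [set W lo1; U lo2].
Proof.
move=> lo12; apply/existsP; exists (W lo1); apply/existsP; exists (U lo2).
by rewrite eqxx !coord_space_dim ?(proper_sub (coord_flag_proper lo12)) //; lia.
Qed.

Definition coord_flag lo1 lo2 (lo12 : (lo2 <= lo1 <= 1)%N) : Omega F d k :=
  exist (fun X => is_flagpair k X) _ (is_flagpair_coord lo12).

Lemma transvection_fixes_coord_flagE (i j : 'I_d) (ij : i != j) lo1 lo2 (lo12 : (lo2 <= lo1 <= 1)%N) :
  (flag_perm k (transvection_unit F ij) (coord_flag lo12) == coord_flag lo12) =
    ((lo1 <= i < lo1 + k) ==> (lo1 <= j < lo1 + k))
    && ((lo2 <= i < lo2 + (d - k)) ==> (lo2 <= j < lo2 + (d - k))).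
Proof.
by rewrite (flag_perm_fixedE _ _ (coord_flag_proper lo12)) // !transvection_fixes_coord_spaceE.
Qed.

Local Notation flag00 := (@coord_flag 0 0 isT).
Local Notation flag11 := (@coord_flag 1 1 isT).
Local Notation flag10 := (@coord_flag 1 0 isT).

Lemma irredundant_coord_flags (G : {group {perm Omega F d k}}) :
  (forall p, is_PSL_perm p -> p \in G) -> irredundant G [:: flag10; flag00; flag11].
Proof.
move=> PSL_G.
have stab_shrinks s y (i j : 'I_d) (ij : i != j) :
    all (fun z => flag_perm k (transvection_unit F ij) z == z) s ->
    flag_perm k (transvection_unit F ij) y != y ->
    pw_stab G (rcons s y) \proper pw_stab G s.
  move=> fix_s moved_y; apply: proper_pw_stab_rcons moved_y.
  by rewrite inE fix_s andbT; apply/PSL_G/flag_perm_PSL/det_transvection.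
have [lt0 lt1 ltk ltdk] : [/\ 0 < d, 1 < d, k < d & d - k < d]%N by split; lia.
pose e0 := Ordinal lt0; pose e1 := Ordinal lt1; pose ek := Ordinal ltk; pose edk := Ordinal ltdk.
have ne10 : e1 != e0 by [].
have ne0k : e0 != ek by rewrite -val_eqE /=; lia.
have nedk0 : edk != e0 by rewrite -val_eqE /=; lia.
(* [transvection i j] maps e_i to e_i + e_j: the three transvections below move
   exactly W_1, W_0 and U_1 respectively among the four subspaces. *)
apply: (irredundant_rcons (s := [:: flag10; flag00])); last first.
  by apply: (stab_shrinks _ _ _ _ nedk0) => /=; rewrite !transvection_fixes_coord_flagE /=; lia.
apply: (irredundant_rcons (s := [:: flag10])); last first.
  by apply: (stab_shrinks _ _ _ _ ne0k) => /=; rewrite !transvection_fixes_coord_flagE /=; lia.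
apply: (irredundant_rcons (s := [::])) => //.
by apply: (stab_shrinks _ _ _ _ ne10) => //; rewrite transvection_fixes_coord_flagE /=; lia.
Qed.

Lemma pw_stab_coord_flags (G : {group {perm Omega F d k}}) :
  (forall p, p \in G -> is_Aut_perm p) ->
  pw_stab G [:: flag00; flag11] \subset pw_stab G (rcons [:: flag00; flag11] flag10).
Proof.
move=> Aut_G; apply/subsetP=> g; rewrite !inE /= !andbT => /and3P[gG fix00 fix11].
rewrite gG fix00 fix11 -val_eqE /=.
have [h val_g h_mono_anti] := Aut_perm_imset (Aut_G _ gG).
have lt0 : (0 < d)%N by lia.
rewrite val_g; apply/eqP; apply: (imset_set2_fixed_cross (W1 := W 0) (U2 := U 1) _ _ _ _ h_mono_anti).
- exact: coord_flag_proper.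
- exact: coord_flag_proper.
- exact: proper_sub (@coord_flag_proper 1 0 isT).
- by apply: (coord_space_not_subset F (i := Ordinal lt0)) => /=; lia.
- by have := val_g flag00; rewrite (eqP fix00) => /esym.
- by have := val_g flag11; rewrite (eqP fix11) => /esym.
Qed.

End CoordinateFlags.

Theorem lemma3p6 (F : finFieldType) (d k : nat) (G : {group {perm Omega F d k}}) :
  (3 <= d)%N -> (1 <= k)%N -> (2 * k < d)%N ->
  (forall p, is_PSL_perm p -> p \in G) ->
  (forall g s, g \in G -> is_PSL_perm s -> is_PSL_perm (g^-1 * s * g)%g) ->
  (forall p, p \in G -> is_Aut_perm p) ->
  (exists2 p, p \in G & ~ is_PGammaL_perm p) ->
  ~ IBIS G.
Proof.
move=> _ k_gt0 two_k_lt_d PSL_G _ Aut_G _.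
have irr_flags := irredundant_coord_flags (k_gt0 := k_gt0) (two_k_lt_d := two_k_lt_d) PSL_G.
apply: (not_IBIS_of_redundant irr_flags); last exact: pw_stab_coord_flags.
by rewrite perm_sym perm_rcons.
Qed.
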